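(* Let $m\ge1$ and let $\mathcal C\subseteq\mathbb Z^m$ be a code with minimum distance $d_a(\mathcal C)=d$. Then: (i) for all non-negative integers $r^+,r^-$ with $r^++r^-<d$, $\overline\mu(\mathcal C)\le|S_m(r^+,r^-)|^{-1}$; (ii) if $2\le d\le 2m+1$, then $\overline\mu(\mathcal C)<\lceil\tfrac{d-1}{2}\rceil!\,\lfloor\tfrac{d-1}{2}\rfloor!\,\big(m+1-\lceil\tfrac{d-1}{2}\rceil\big)^{1-d}$; (iii) if $1\le m<d$, then $\overline\mu(\mathcal C)<2^m (m!)^3\,((2m)!)^{-1}(d-m)^{-m}$.
   Context: $d_a(\mathbf x,\mathbf y)=\max\{\sum_{i:x_i>y_i}(x_i-y_i),\sum_{i:x_i<y_i}(y_i-x_i)\}$ on $\mathbb Z^m$; $d_a(\mathcal C)$ is the minimum distance. $S_m(r^+,r^-)=\{\mathbf x\in\mathbb Z^m:\sum_{i:x_i>0}x_i\le r^+,\ \sum_{i:x_i<0}|x_i|\le r^-\}$. The upper density is $\overline\mu(\mathcal C)=\limsup_{k\to\infty}|\mathcal C\cap\{-k,\dots,k\}^m|/(2k+1)^m$. *)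

From Stdlib Require Import Reals ZArith List Classical ClassicalEpsilon.
Import ListNotations.

(* Points of Z^m are lists of integers of length m. *)

Definition interval (k : nat) : list Z :=
  map (fun i => (Z.of_nat i - Z.of_nat k)%Z) (seq 0 (2 * k + 1)).

Fixpoint box (m k : nat) : list (list Z) :=
  match m with
  | O => [[]]
  | S m' => flat_map (fun z => map (cons z) (box m' k)) (interval k)
  end.

Definition pos_sum (v : list Z) : Z := fold_right (fun a s => (Z.max a 0 + s)%Z) 0%Z v.
Definition neg_sum (v : list Z) : Z := fold_right (fun a s => (Z.max (- a) 0 + s)%Z) 0%Z v.

Definition vsub (x y : list Z) : list Z := map (fun p => (fst p - snd p)%Z) (combine x y).

Definition d_a (x y : list Z) : Z := Z.max (pos_sum (vsub x y)) (neg_sum (vsub x y)).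

Definition is_code (m : nat) (C : list Z -> Prop) : Prop :=
  forall x, C x -> length x = m.

Definition min_dist (C : list Z -> Prop) (d : nat) : Prop :=
  (forall x y, C x -> C y -> x <> y -> (Z.of_nat d <= d_a x y)%Z) /\
  (exists x y, C x /\ C y /\ x <> y /\ d_a x y = Z.of_nat d).

Definition decP (P : Prop) : bool :=
  if excluded_middle_informative P then true else false.

Definition count_in_box (m : nat) (C : list Z -> Prop) (k : nat) : nat :=
  length (filter (fun x => decP (C x)) (box m k)).

Definition density_seq (m : nat) (C : list Z -> Prop) (k : nat) : R :=
  (INR (count_in_box m C k) / INR (2 * k + 1) ^ m)%R.

Definition is_limsup (u : nat -> R) (l : R) : Prop :=
  forall eps : R, (eps > 0)%R ->
    (exists N, forall n, (n >= N)%nat -> (u n <= l + eps)%R) /\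
    (forall N, exists n, (n >= N)%nat /\ (l - eps <= u n)%R).

Definition upper_density (m : nat) (C : list Z -> Prop) (mu : R) : Prop :=
  is_limsup (density_seq m C) mu.

(* |S_m(r+, r-)|; S_m(r+,r-) lies inside {-(r++r-),...,r++r-}^m *)
Definition S_card (m rp rn : nat) : nat :=
  length (filter (fun x => (Z.leb (pos_sum x) (Z.of_nat rp) && Z.leb (neg_sum x) (Z.of_nat rn))%bool)
                 (box m (rp + rn))).

From Stdlib Require Import Reals ZArith List Lia Lra Classical ClassicalEpsilon.
From mathcomp Require all_boot zify.

(* Translates of S_m(r+, r-) by distinct codewords are disjoint when r+ + r- < d: a common
   point x + s = y + s' would give d_a(x, y) <= r+ + r-.  Counting these translates inside a
   box enlarged by r+ + r- bounds the density by 1 / |S_m(r+, r-)|, which is (i).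
   Splitting on the first coordinate gives a recursion for |S_m(p, n)|, solved by
   sum_k C(m,k) C(p,k) C(m-k+n, n) (choose the k positive coordinates, their values, and
   the values of the others).  Bounding a single term of this sum for p = ceil((d-1)/2),
   n = floor((d-1)/2) gives (ii); comparing it termwise with (2m)! = m!^2 sum_k C(m,k)^2
   for n = floor((d-m)/2), p = d-1-n gives (iii). *)

Module AsymBall.
Import all_boot zify.

Definition ball_size (m p n : nat) : nat :=
  \sum_(k < m.+1) 'C(m, k) * 'C(p, k) * 'C(m - k + n, n).

Lemma sum_bin_ord p k : \sum_(z < p) 'C(z, k) = 'C(p, k.+1).
Proof.
elim: p => [|p IH]; first by rewrite big_ord0.
by rewrite big_ord_recr /= IH binS.
Qed.

Lemma sum_bin_diag a n : \sum_(j < n.+1) 'C(a + j, j) = 'C(a + n.+1, n).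
Proof.
elim: n => [|n IH]; first by rewrite big_ord_recl big_ord0 !bin0.
by rewrite big_ord_recr /= IH (addnS a n.+1) binS addnC.
Qed.

Lemma ball_size0 p n : ball_size 0 p n = 1.
Proof. by rewrite /ball_size big_ord_recl big_ord0 /= !bin0 binn. Qed.

Lemma ball_sizeS m p n :
  ball_size m.+1 p n = \sum_(z < p) ball_size m z n + \sum_(j < n.+1) ball_size m p j.
Proof.
rewrite /ball_size.
have -> : \sum_(z < p) \sum_(k < m.+1) 'C(m, k) * 'C(z, k) * 'C(m - k + n, n)
    = \sum_(k < m.+1) 'C(m, k) * 'C(p, k.+1) * 'C(m - k + n, n).
  rewrite exchange_big; apply: eq_bigr => k _.
  by rewrite -sum_bin_ord big_distrr big_distrl; apply: eq_bigr.
have -> : \sum_(j < n.+1) \sum_(k < m.+1) 'C(m, k) * 'C(p, k) * 'C(m - k + j, j)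
    = \sum_(k < m.+1) 'C(m, k) * 'C(p, k) * 'C(m - k + n.+1, n).
  by rewrite exchange_big; apply: eq_bigr => k _; rewrite -sum_bin_diag big_distrr.
rewrite big_ord_recl (big_ord_recl m (fun k => 'C(m, k) * 'C(p, k) * 'C(m - k + n.+1, n))) /=.
rewrite subn0 !bin0 !mul1n.
have -> : \sum_(i < m.+1) 'C(m.+1, bump 0 i) * 'C(p, bump 0 i) * 'C(m.+1 - bump 0 i + n, n)
    = \sum_(k < m.+1) 'C(m, k) * 'C(p, k.+1) * 'C(m - k + n, n)
      + \sum_(k < m.+1) 'C(m, k.+1) * 'C(p, k.+1) * 'C(m - k + n, n).
  rewrite -big_split /=; apply: eq_bigr => k _.
  by rewrite /bump /= add1n binS subSS -!mulnDl addnC.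
rewrite (big_ord_recr m (fun k => 'C(m, k.+1) * 'C(p, k.+1) * 'C(m - k + n, n))) /=.
rewrite (bin_small (ltnSn m)) !mul0n addn0 subn0.
have -> : \sum_(i < m) 'C(m, i.+1) * 'C(p, i.+1) * 'C(m - i + n, n)
    = \sum_(i < m) 'C(m, bump 0 i) * 'C(p, bump 0 i) * 'C(m - bump 0 i + n.+1, n).
  by apply: eq_bigr => [[i Hi]] _ /=; rewrite /bump /= add1n addnS -addSn subnSK.
by rewrite !addnA; congr (_ + _); rewrite addnC addnS -addSn.
Qed.

Lemma big_ord_list_sum (f : nat -> nat) n :
  \sum_(i < n) f i = list_sum (List.map f (List.seq 0 n)).
Proof.
elim: n => [|n IH]; first by rewrite big_ord0.
by rewrite List.seq_S List.map_app list_sum_app big_ord_recr IH /= Nat.add_0_r.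
Qed.

Lemma ball_sizeS_list m p n :
  ball_size m.+1 p n =
  (list_sum (List.map (fun j => ball_size m p j) (List.seq 0 n.+1)) +
   list_sum (List.map (fun z => ball_size m (p - z.+1)%coq_nat n) (List.seq 0 p)))%coq_nat.
Proof.
rewrite ball_sizeS addnC -!big_ord_list_sum; congr (_ + _).
by rewrite (reindex_inj rev_ord_inj).
Qed.

Lemma ball_size_gt0 m p n : 0 < ball_size m p n.
Proof.
rewrite /ball_size big_ord_recl /= !bin0 !mul1n subn0.
by rewrite ltn_addr // bin_gt0 leq_addl.
Qed.

Lemma ball_size_gt_term m p n k : 0 < k <= m ->
  'C(m, k) * 'C(p, k) * 'C(m - k + n, n) < ball_size m p n.
Proof.
move=> /andP [k_gt0 k_le_m].
have k_lt : k < m.+1 by [].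
rewrite /ball_size (bigD1 ord0) //= (bigD1 (Ordinal k_lt)) /=; last by rewrite -val_eqE /= -lt0n.
rewrite !bin0 !mul1n subn0.
have : 0 < 'C(m + n, n) by rewrite bin_gt0 leq_addl.
lia.
Qed.

Lemma leq_expn2r a b k : a <= b -> a ^ k <= b ^ k.
Proof. by move=> le_ab; case: k => // k; rewrite leq_exp2r. Qed.

Lemma expn_sub_leq_ffact n k : (n.+1 - k) ^ k <= n ^_ k.
Proof.
elim: k n => [|k IH] [|n] //; first by rewrite subSS sub0n exp0n.
by rewrite ffactSS subSS expnS leq_mul ?leq_subr.
Qed.

Lemma expn_sub_leq_fact_bin p k : (p.+1 - k) ^ k <= k`! * 'C(p, k).
Proof. by rewrite mulnC bin_ffact expn_sub_leq_ffact. Qed.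

Lemma expn_leq_fact_bin_add n j : n.+1 ^ j <= j`! * 'C(j + n, n).
Proof.
have E : (j + n).+1 - j = n.+1 by lia.
by have := expn_sub_leq_fact_bin (j + n) j; rewrite E -bin_sub ?leq_addr // addKn.
Qed.

Lemma ball_size_lb_balanced m a b : 0 < a <= m ->
  (m.+1 - a) ^ (a + b) < a`! * b`! * ball_size m a b.
Proof.
move=> a_range; have /andP [_ a_le_m] := a_range.
have lb_b := expn_sub_leq_fact_bin (m - a + b) b.
rewrite (_ : (m - a + b).+1 - b = m.+1 - a) in lb_b; last by lia.
apply: (@leq_ltn_trans (a`! * b`! * ('C(m, a) * 'C(a, a) * 'C(m - a + b, b)))).
  by rewrite binn muln1 mulnACA expnD leq_mul ?expn_sub_leq_fact_bin.
by rewrite ltn_pmul2l ?ball_size_gt_term // muln_gt0 !fact_gt0.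
Qed.

Lemma ltn_sum_ord0 m (f g : 'I_m.+1 -> nat) :
  (forall i, f i <= g i) -> f ord0 < g ord0 -> \sum_i f i < \sum_i g i.
Proof.
move=> le_fg lt0; rewrite !big_ord_recl -addSn leq_add //.
by apply: leq_sum => i _; apply: le_fg.
Qed.

Lemma expn_leq_ball_term m k n t p : k <= m -> t < 2 * n.+1 -> t <= 2 * (p.+1 - m) ->
  t ^ m <= 2 ^ m * ((k`! * 'C(p, k)) * ((m - k)`! * 'C(m - k + n, n))).
Proof.
move=> k_le_m t_lt t_le.
have lb_n := expn_leq_fact_bin_add n (m - k).
rewrite -(subnKC k_le_m) addKn !expnD mulnACA leq_mul //.
  apply: (leq_trans _ (leq_mul (leqnn _) (expn_sub_leq_fact_bin p k))).
  by rewrite -expnMn leq_expn2r //; lia.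
apply: (leq_trans _ (leq_mul (leqnn _) lb_n)).
by rewrite -expnMn leq_expn2r //; lia.
Qed.

Lemma ball_size_lb_spread m p n t : 0 < m -> t < 2 * n.+1 -> t <= 2 * (p.+1 - m) ->
  (2 * m)`! * t ^ m < 2 ^ m * m`! ^ 3 * ball_size m p n.
Proof.
move=> m_gt0 t_lt t_le.
have -> : (2 * m)`! * t ^ m = \sum_(k < m.+1) (m`! * 'C(m, k)) ^ 2 * t ^ m.
  rewrite -big_distrl /= mul2n -addnn -(bin_fact (leq_addl m m)) addnK -Vandermonde.
  rewrite big_distrl /=; congr (_ * _); apply: eq_bigr => k _.
  by rewrite bin_sub ?leq_ord // !expnS expn0; lia.
have -> : 2 ^ m * m`! ^ 3 * ball_size m p n = \sum_(k < m.+1) (m`! * 'C(m, k)) ^ 2 *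
    (2 ^ m * ((k`! * 'C(p, k)) * ((m - k)`! * 'C(m - k + n, n)))).
  rewrite /ball_size big_distrr /=; apply: eq_bigr => k _.
  by rewrite -(bin_fact (leq_ord k)); lia.
apply: ltn_sum_ord0 => [k|]; first by rewrite leq_mul // expn_leq_ball_term ?leq_ord.
rewrite /= bin0 muln1 ltn_pmul2l ?expn_gt0 ?fact_gt0 // !bin0 fact0 !mul1n subn0.
apply: (leq_trans _ (leq_mul (leqnn _) (expn_leq_fact_bin_add n m))).
by rewrite -expnMn ltn_exp2r // mulnC.
Qed.

Lemma fact_factorial n : fact n = n`!.
Proof. by elim: n => // n IH; rewrite factS -IH. Qed.

Lemma pow_expn a b : Nat.pow a b = a ^ b.
Proof. by elim: b => // b IH; rewrite expnS -IH. Qed.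

Lemma ball_size_gt0_Nat m p n : (0 < ball_size m p n)%coq_nat.
Proof. exact/ltP/ball_size_gt0. Qed.

Lemma ball_size_lb_balanced_Nat m a b : (0 < a)%coq_nat -> (a <= m)%coq_nat ->
  (Nat.pow (m.+1 - a) (a + b) < fact a * fact b * ball_size m a b)%coq_nat.
Proof.
move=> /ltP a_gt0 /leP a_le_m; apply/ltP.
by rewrite pow_expn !fact_factorial ball_size_lb_balanced // a_gt0.
Qed.

Lemma ball_size_lb_spread_Nat m p n t : (0 < m)%coq_nat ->
  (t < 2 * n.+1)%coq_nat -> (t <= 2 * (p.+1 - m))%coq_nat ->
  (fact (2 * m) * Nat.pow t m < Nat.pow 2 m * Nat.pow (fact m) 3 * ball_size m p n)%coq_nat.
Proof.
move=> /ltP m_gt0 /ltP t_lt /leP t_le; apply/ltP.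
by rewrite !pow_expn !fact_factorial ball_size_lb_spread.
Qed.
End AsymBall.

(* mathcomp's ssreflect globally disables bullet focusing. *)
Set Bullet Behavior "Strict Subproofs".
Import AsymBall.

Definition in_range (k : nat) (z : Z) : Prop := (- Z.of_nat k <= z <= Z.of_nat k)%Z.

Lemma in_interval k z : In z (interval k) <-> in_range k z.
Proof.
  unfold interval, in_range. rewrite in_map_iff. split.
  - intros [i [<- Hi]]. apply in_seq in Hi. lia.
  - intros H. exists (Z.to_nat (z + Z.of_nat k)). split.
    + rewrite Z2Nat.id; lia.
    + apply in_seq. lia.
Qed.

Lemma in_box m k v : In v (box m k) <-> length v = m /\ Forall (in_range k) v.
Proof.
  revert v; induction m as [|m IH]; intros v; simpl.
  - split.
    + intros [<- | []]. auto.
    + intros [H _]. destruct v; [auto | discriminate].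
  - rewrite in_flat_map. split.
    + intros [z [Hz Hv]]. apply in_map_iff in Hv. destruct Hv as [w [<- Hw]].
      apply IH in Hw. destruct Hw. apply in_interval in Hz. simpl. auto.
    + intros [Hl Hf]. destruct v as [|z w]; [discriminate|].
      inversion Hf; subst. exists z. split.
      * now apply in_interval.
      * apply in_map, IH. auto.
Qed.

Lemma NoDup_flat_map {A B} (f : A -> list B) l :
  NoDup l -> (forall x, In x l -> NoDup (f x)) ->
  (forall x y b, In x l -> In y l -> In b (f x) -> In b (f y) -> x = y) ->
  NoDup (flat_map f l).
Proof.
  induction l as [|a l IH]; intros Hnd Hf Hd; simpl; [constructor|].
  inversion Hnd; subst. apply NoDup_app.
  - apply Hf; simpl; auto.
  - apply IH; auto; intros; [apply Hf | eapply Hd]; simpl; eauto.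
  - intros b Hb Hb'. apply in_flat_map in Hb'. destruct Hb' as [y [Hy Hby]].
    assert (a = y) by (eapply Hd; simpl; eauto). subst; auto.
Qed.

Lemma NoDup_box m k : NoDup (box m k).
Proof.
  induction m as [|m IH]; simpl; [repeat constructor; auto|].
  apply NoDup_flat_map.
  - unfold interval. apply NoDup_map_NoDup_ForallPairs; [intros x y _ _ H; cbn in H; lia | apply seq_NoDup].
  - intros x _. apply NoDup_map_NoDup_ForallPairs; auto.
    intros a b _ _ H. now inversion H.
  - intros x y b _ _ Hx Hy. apply in_map_iff in Hx, Hy.
    destruct Hx as [u [<- _]]. destruct Hy as [w [Hw _]]. now inversion Hw.
Qed.

Lemma length_box m k : length (box m k) = ((2 * k + 1) ^ m)%nat.
Proof.
  induction m as [|m IH]; simpl; auto.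
  rewrite (flat_map_constant_length (c := ((2 * k + 1) ^ m)%nat)).
  - unfold interval. now rewrite length_map, length_seq.
  - intros x _. now rewrite length_map.
Qed.

Definition ball_count (m K : nat) (p n : Z) : nat :=
  length (filter (fun x => Z.leb (pos_sum x) p && Z.leb (neg_sum x) n)%bool (box m K)).

Lemma pos_sum_nonneg v : (0 <= pos_sum v)%Z.
Proof. induction v; simpl; lia. Qed.

Lemma neg_sum_nonneg v : (0 <= neg_sum v)%Z.
Proof. induction v; simpl; lia. Qed.

Lemma ball_count_neg m K p n : (p < 0 \/ n < 0)%Z -> ball_count m K p n = 0%nat.
Proof.
  intros H. unfold ball_count. rewrite (filter_ext_in _ (fun _ => false)).
  - induction (box m K); simpl; auto.
  - intros x _. pose proof (pos_sum_nonneg x). pose proof (neg_sum_nonneg x).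
    destruct (Z.leb_spec (pos_sum x) p), (Z.leb_spec (neg_sum x) n); simpl; auto; lia.
Qed.

Lemma filter_flat_map {A B} (f : B -> bool) (g : A -> list B) l :
  filter f (flat_map g l) = flat_map (fun x => filter f (g x)) l.
Proof. induction l; simpl; auto. now rewrite filter_app, IHl. Qed.

Lemma ball_count_S m K p n : ball_count (S m) K p n =
  list_sum (map (fun z => ball_count m K (p - Z.max z 0) (n - Z.max (- z) 0)) (interval K)).
Proof.
  unfold ball_count. simpl box. rewrite filter_flat_map, length_flat_map.
  f_equal. apply map_ext. intros z. rewrite filter_map_swap, length_map.
  f_equal. apply filter_ext. intros v. simpl.
  destruct (Z.leb_spec (Z.max z 0 + pos_sum v) p), (Z.leb_spec (pos_sum v) (p - Z.max z 0));
  destruct (Z.leb_spec (Z.max (- z) 0 + neg_sum v) n), (Z.leb_spec (neg_sum v) (n - Z.max (- z) 0));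
  simpl; auto; lia.
Qed.

Lemma list_sum_map_zero {A} (f : A -> nat) l :
  (forall x, In x l -> f x = 0%nat) -> list_sum (map f l) = 0%nat.
Proof. induction l; simpl; intros H; auto. rewrite H, IHl; auto. Qed.

Lemma map_seq_shift {A} (f : nat -> A) a len :
  map f (seq a len) = map (fun j => f (a + j)%nat) (seq 0 len).
Proof.
  revert a; induction len as [|len IH]; intros a; simpl; auto.
  rewrite Nat.add_0_r. f_equal. rewrite IH, <- seq_shift, map_map. apply map_ext.
  intros j. f_equal. lia.
Qed.

(* A first coordinate z uses up z of the positive budget or -z of the negative one; values
   of z outside [-n, p] contribute nothing, and the rest give the two sums of ball_sizeS. *)
Lemma ball_count_eq_ball_size m K p n : (p + n <= K)%nat ->
  ball_count m K (Z.of_nat p) (Z.of_nat n) = ball_size m p n.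
Proof.
  revert p n. induction m as [|m IH]; intros p n Hk.
  - rewrite ball_size0. unfold ball_count. simpl.
    rewrite (proj2 (Z.leb_le 0 _)), (proj2 (Z.leb_le 0 _)) by lia. reflexivity.
  - rewrite ball_count_S, ball_sizeS_list. unfold interval. rewrite map_map.
    replace (2 * K + 1)%nat with ((K - n) + (S n + (p + (K - p))))%nat by lia.
    rewrite !seq_app, !map_app, !list_sum_app.
    rewrite (list_sum_map_zero _ (seq 0 (K - n))), (list_sum_map_zero _ (seq _ (K - p))).
    2, 3: intros i Hi; apply in_seq in Hi; apply ball_count_neg; lia.
    rewrite (map_seq_shift _ (0 + (K - n))), (map_seq_shift _ (0 + (K - n) + S n)).
    rewrite (map_ext_in _ (fun j => ball_size m p j) (seq 0 (S n))),
            (map_ext_in _ (fun z => ball_size m (p - S z) n) (seq 0 p)).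
    + lia.
    + intros j Hj. apply in_seq in Hj. rewrite <- IH by lia. f_equal; lia.
    + intros j Hj. apply in_seq in Hj. rewrite <- IH by lia. f_equal; lia.
Qed.

Lemma S_card_eq_ball_size m rp rn : S_card m rp rn = ball_size m rp rn.
Proof. apply ball_count_eq_ball_size. lia. Qed.

Definition vadd (x s : list Z) : list Z := map (fun p => (fst p + snd p)%Z) (combine x s).

Lemma length_vadd x s : length x = length s -> length (vadd x s) = length x.
Proof. intros H. unfold vadd. rewrite length_map, length_combine, H. lia. Qed.

Lemma vadd_bnd x s k R : length x = length s -> Forall (in_range k) x -> Forall (in_range R) s ->
  Forall (in_range (k + R)) (vadd x s).
Proof.
  revert s; induction x as [|a x IH]; intros [|b s] Hl Hx Hs; simpl in *;
  try discriminate; constructor; inversion Hx; inversion Hs; subst.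
  - unfold in_range in *. simpl. lia.
  - apply IH; auto.
Qed.

Lemma vadd_inj x s s' : length s = length x -> length s' = length x ->
  vadd x s = vadd x s' -> s = s'.
Proof.
  revert s s'; induction x as [|a x IH]; intros [|b s] [|b' s'] H1 H2 H;
  simpl in *; try discriminate; auto.
  inversion H. f_equal; [lia | apply IH; auto].
Qed.

Lemma vadd_eq_vsub x y s s' : length s = length x -> length s' = length x ->
  length y = length x -> vadd x s = vadd y s' -> vsub x y = vsub s' s.
Proof.
  revert y s s'; induction x as [|a x IH]; intros [|c y] [|b s] [|b' s'] H1 H2 H3 H;
  simpl in *; try discriminate; auto.
  inversion H. unfold vsub in *. simpl. f_equal; [lia | apply IH; auto].
Qed.

Lemma vsub_sums_le a b : length a = length b ->
  (pos_sum (vsub b a) <= pos_sum b + neg_sum a /\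
   neg_sum (vsub b a) <= neg_sum b + pos_sum a)%Z.
Proof.
  revert b; induction a as [|x a IH]; intros [|y b] H; simpl in *; try discriminate.
  - unfold vsub; simpl; lia.
  - unfold vsub in *. simpl. destruct (IH b) as [H1 H2]; auto. lia.
Qed.

Lemma NoDup_code_translates m d rp rn (Cw Sl : list (list Z)) :
  (rp + rn < d)%nat -> NoDup Cw -> NoDup Sl ->
  (forall x, In x Cw -> length x = m) ->
  (forall x y, In x Cw -> In y Cw -> x <> y -> (Z.of_nat d <= d_a x y)%Z) ->
  (forall s, In s Sl ->
     length s = m /\ (pos_sum s <= Z.of_nat rp)%Z /\ (neg_sum s <= Z.of_nat rn)%Z) ->
  NoDup (flat_map (fun x => map (vadd x) Sl) Cw).
Proof.
  intros Hr HCw HSl HlC Hd HS. apply NoDup_flat_map; auto.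
  - intros x Hx. apply NoDup_map_NoDup_ForallPairs; auto.
    intros s s' Hs Hs' E. apply (vadd_inj x); rewrite ?(HlC x Hx); auto.
    + now destruct (HS s Hs).
    + now destruct (HS s' Hs').
  - intros x y b Hx Hy Hbx Hby. apply in_map_iff in Hbx, Hby.
    destruct Hbx as [s [Es Hs]], Hby as [s' [Es' Hs']].
    destruct (classic (x = y)) as [|Hne]; auto. exfalso.
    destruct (HS s Hs) as [Hls [Hps Hns]], (HS s' Hs') as [Hls' [Hps' Hns']].
    pose proof (Hd x y Hx Hy Hne) as Hdist.
    assert (E : vsub x y = vsub s' s).
    { pose proof (HlC x Hx). pose proof (HlC y Hy). apply vadd_eq_vsub; congruence. }
    unfold d_a in Hdist. rewrite E in Hdist.
    destruct (vsub_sums_le s s') as [P1 P2]; [congruence|]. lia.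
Qed.

Lemma decP_true P : decP P = true -> P.
Proof. unfold decP. destruct (excluded_middle_informative P); auto. discriminate. Qed.

Lemma count_in_box_mul_S_card_le m C d rp rn k : is_code m C -> min_dist C d ->
  (rp + rn < d)%nat ->
  (count_in_box m C k * S_card m rp rn <= (2 * (k + (rp + rn)) + 1) ^ m)%nat.
Proof.
  intros Hc [Hd _] Hr.
  set (Cw := filter (fun x => decP (C x)) (box m k)).
  set (Sl := filter (fun x => Z.leb (pos_sum x) (Z.of_nat rp) && Z.leb (neg_sum x) (Z.of_nat rn))%bool
                    (box m (rp + rn))).
  change (length Cw * length Sl <= (2 * (k + (rp + rn)) + 1) ^ m)%nat.
  rewrite <- (flat_map_constant_length (fun x => map (vadd x) Sl)), <- length_box
    by (intros; apply length_map).
  assert (HCw : forall x, In x Cw -> (length x = m /\ Forall (in_range k) x) /\ C x).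
  { intros x Hx. apply filter_In in Hx. split; [apply in_box | apply decP_true]; tauto. }
  assert (HSl : forall s, In s Sl -> (length s = m /\ Forall (in_range (rp + rn)) s) /\
     (pos_sum s <= Z.of_nat rp)%Z /\ (neg_sum s <= Z.of_nat rn)%Z).
  { intros s Hs. apply filter_In in Hs. rewrite in_box, Bool.andb_true_iff, !Z.leb_le in Hs.
    tauto. }
  apply NoDup_incl_length.
  - apply (NoDup_code_translates m d rp rn); auto; try (apply NoDup_filter, NoDup_box).
    + intros x Hx. apply HCw; auto.
    + intros x y Hx Hy. apply Hd; apply HCw; auto.
    + intros s Hs. destruct (HSl s Hs) as [[? _] ?]. auto.
  - intros b Hb. apply in_flat_map in Hb. destruct Hb as [x [Hx Hb]].
    apply in_map_iff in Hb. destruct Hb as [s [<- Hs]].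
    destruct (HCw x Hx) as [[Hlx Bx] _], (HSl s Hs) as [[Hls Bs] _].
    apply in_box. split.
    + rewrite length_vadd; congruence.
    + apply vadd_bnd; auto. congruence.
Qed.

Open Scope R_scope.

Lemma pow_1_plus_le m x : 0 <= x <= 1 -> (1 + x) ^ m <= 1 + (2 ^ m - 1) * x.
Proof.
  intros Hx. induction m as [|m IH]; simpl; [lra|].
  assert (H2m : 1 <= 2 ^ m) by (apply pow_R1_Rle; lra).
  assert (H1 : (1 + x) * (1 + x) ^ m <= (1 + x) * (1 + (2 ^ m - 1) * x))
    by (apply Rmult_le_compat_l; lra).
  assert (H2 : (2 ^ m - 1) * (x * x) <= (2 ^ m - 1) * x)
    by (apply Rmult_le_compat_l; nra).
  nra.
Qed.

Lemma Rdiv_lt_of_lt_mul a b c : 0 < b -> a < c * b -> a / b < c.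
Proof.
  intros Hb H. apply Rmult_lt_reg_r with b; [lra|].
  unfold Rdiv. rewrite Rmult_assoc, Rinv_l, Rmult_1_r by lra. lra.
Qed.

Lemma limsup_le_of_le_inv (u : nat -> R) mu a b N0 : 0 <= b ->
  (forall n, (n >= N0)%nat -> u n <= a + b / (INR n + 1)) -> is_limsup u mu -> mu <= a.
Proof.
  intros Hb Hu Hl. destruct (Rle_or_lt mu a) as [|Hlt]; auto. exfalso.
  set (eps := (mu - a) / 2). assert (He : eps > 0) by (unfold eps; lra).
  destruct (INR_unbounded (b / eps)) as [N1 HN1].
  destruct (proj2 (Hl eps He) (max N0 N1)) as [n [Hn Hun]].
  pose proof (Hu n ltac:(lia)) as Hun'.
  assert (Hbn : b < eps * (INR n + 1)).
  { pose proof (le_INR N1 n ltac:(lia)). replace b with (eps * (b / eps)) by (field; lra).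
    apply Rmult_lt_compat_l; lra. }
  assert (b / (INR n + 1) < eps) by (apply Rdiv_lt_of_lt_mul; [pose proof (pos_INR n) |]; lra).
  unfold eps in *. lra.
Qed.

Lemma INR_S_card_pos m rp rn : 0 < INR (S_card m rp rn).
Proof. rewrite S_card_eq_ball_size. apply lt_0_INR, ball_size_gt0_Nat. Qed.

Lemma density_seq_le m C d rp rn k : is_code m C -> min_dist C d -> (rp + rn < d)%nat ->
  (rp + rn <= k)%nat ->
  density_seq m C k <= / INR (S_card m rp rn) +
    2 ^ m * INR (2 * (rp + rn)) / INR (S_card m rp rn) / (INR k + 1).
Proof.
  intros Hc Hd Hr Hk. pose proof (INR_S_card_pos m rp rn) as HG.
  set (G := INR (S_card m rp rn)) in *. set (c := INR (count_in_box m C k)).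
  set (D := INR (2 * k + 1)). set (x := INR (2 * (rp + rn)) / D).
  pose proof (pos_INR k) as Hk0.
  assert (HD : INR k + 1 <= D) by (unfold D; rewrite plus_INR, mult_INR; simpl; lra).
  assert (HD0 : 0 < D) by lra.
  assert (HDm : 0 < D ^ m) by (apply pow_lt; lra).
  assert (HxD : x * D = INR (2 * (rp + rn))) by (unfold x; field; lra).
  assert (H2R : 0 <= INR (2 * (rp + rn)) <= D) by (split; [apply pos_INR | apply le_INR; lia]).
  assert (Hx : 0 <= x <= 1) by nra.
  assert (Hpack : c * G <= D ^ m * (1 + x) ^ m).
  { rewrite <- Rpow_mult_distr.
    replace (D * (1 + x)) with (INR (2 * (k + (rp + rn)) + 1)).
    - unfold c, G. rewrite <- pow_INR, <- mult_INR.
      apply le_INR, (count_in_box_mul_S_card_le m C d); auto.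
    - rewrite Rmult_plus_distr_l, Rmult_1_r, Rmult_comm, HxD. unfold D.
      rewrite <- plus_INR. f_equal. lia. }
  assert (Hbern : (1 + x) ^ m <= 1 + 2 ^ m * x).
  { pose proof (pow_1_plus_le m x Hx). lra. }
  assert (Hx' : x <= INR (2 * (rp + rn)) / (INR k + 1)).
  { apply Rmult_le_reg_r with (INR k + 1); [lra|].
    unfold Rdiv. rewrite Rmult_assoc, Rinv_l, Rmult_1_r by lra. nra. }
  apply Rle_trans with ((1 + 2 ^ m * x) / G).
  - unfold density_seq. fold c D.
    apply Rmult_le_reg_r with (D ^ m * G); [nra|].
    replace (c / D ^ m * (D ^ m * G)) with (c * G) by (field; lra).
    replace ((1 + 2 ^ m * x) / G * (D ^ m * G)) with (D ^ m * (1 + 2 ^ m * x)) by (field; lra).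
    nra.
  - replace ((1 + 2 ^ m * x) / G) with (/ G + (2 ^ m / G) * x) by (field; lra).
    replace (2 ^ m * INR (2 * (rp + rn)) / G / (INR k + 1))
      with ((2 ^ m / G) * (INR (2 * (rp + rn)) / (INR k + 1))) by (field; lra).
    apply Rplus_le_compat_l, Rmult_le_compat_l; auto.
    apply Rmult_le_pos; [apply pow_le; lra | left; apply Rinv_0_lt_compat; lra].
Qed.

Lemma upper_density_le_inv_S_card m C d rp rn mu : is_code m C -> min_dist C d ->
  (rp + rn < d)%nat -> upper_density m C mu -> mu <= / INR (S_card m rp rn).
Proof.
  intros Hc Hd Hr Hmu. pose proof (INR_S_card_pos m rp rn) as HG.
  apply (limsup_le_of_le_inv (density_seq m C) mu _
           (2 ^ m * INR (2 * (rp + rn)) / INR (S_card m rp rn)) (rp + rn)); auto.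
  - unfold Rdiv. apply Rmult_le_pos; [apply Rmult_le_pos; [apply pow_le; lra | apply pos_INR]|].
    left. apply Rinv_0_lt_compat. exact HG.
  - intros k Hk. apply (density_seq_le m C d); auto.
Qed.

Lemma Rinv_INR_lt_div (G X Y : nat) : (0 < G)%nat -> (0 < Y)%nat -> (Y < X * G)%nat ->
  / INR G < INR X / INR Y.
Proof.
  intros HG HY H. apply lt_0_INR in HG, HY. apply lt_INR in H. rewrite mult_INR in H.
  apply Rmult_lt_reg_r with (INR G * INR Y); [nra|].
  replace (/ INR G * (INR G * INR Y)) with (INR Y) by (field; lra).
  replace (INR X / INR Y * (INR G * INR Y)) with (INR X * INR G) by (field; lra).
  exact H.
Qed.

Lemma upper_density_lt_balanced m C d mu : is_code m C -> min_dist C d ->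
  (2 <= d <= 2 * m + 1)%nat -> upper_density m C mu ->
  mu < INR (fact (d / 2)) * INR (fact ((d - 1) / 2)) / INR (m + 1 - d / 2) ^ (d - 1).
Proof.
  intros Hc Hd Hdm Hmu.
  pose proof (Nat.div_mod_eq d 2). pose proof (Nat.mod_upper_bound d 2 ltac:(lia)).
  pose proof (Nat.div_mod_eq (d - 1) 2). pose proof (Nat.mod_upper_bound (d - 1) 2 ltac:(lia)).
  set (a := (d / 2)%nat) in *. set (b := ((d - 1) / 2)%nat) in *.
  apply Rle_lt_trans with (/ INR (S_card m a b)).
  { apply (upper_density_le_inv_S_card m C d); auto. lia. }
  replace (d - 1)%nat with (a + b)%nat by lia.
  rewrite S_card_eq_ball_size, <- mult_INR, <- pow_INR.
  apply Rinv_INR_lt_div.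
  - apply ball_size_gt0_Nat.
  - apply Nat.neq_0_lt_0, Nat.pow_nonzero. lia.
  - replace (m + 1 - a)%nat with (S m - a)%nat by lia.
    apply ball_size_lb_balanced_Nat; lia.
Qed.

Lemma upper_density_lt_spread m C d mu : is_code m C -> min_dist C d ->
  (1 <= m < d)%nat -> upper_density m C mu ->
  mu < 2 ^ m * INR (fact m) ^ 3 / INR (fact (2 * m)) / INR (d - m) ^ m.
Proof.
  intros Hc Hd Hmd Hmu.
  pose proof (Nat.div_mod_eq (d - m) 2). pose proof (Nat.mod_upper_bound (d - m) 2 ltac:(lia)).
  set (n := ((d - m) / 2)%nat) in *.
  apply Rle_lt_trans with (/ INR (S_card m (d - 1 - n) n)).
  { apply (upper_density_le_inv_S_card m C d); auto. lia. }
  replace 2 with (INR 2) by reflexivity.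
  rewrite S_card_eq_ball_size, <- !pow_INR, <- !mult_INR, <- Rdiv_mult_distr, <- mult_INR.
  apply Rinv_INR_lt_div.
  - apply ball_size_gt0_Nat.
  - apply Nat.mul_pos_pos; [apply lt_O_fact | apply Nat.neq_0_lt_0, Nat.pow_nonzero; lia].
  - apply ball_size_lb_spread_Nat; lia.
Qed.

Theorem mainTheorem7 (m : nat) (C : list Z -> Prop) (d : nat) :
  (1 <= m)%nat -> is_code m C -> min_dist C d ->
  (forall rp rn : nat, (rp + rn < d)%nat ->
     forall mu, upper_density m C mu -> mu <= / INR (S_card m rp rn))
  /\
  ((2 <= d <= 2 * m + 1)%nat ->
     forall mu, upper_density m C mu ->
       mu < INR (fact (d / 2)) * INR (fact ((d - 1) / 2))
            / INR (m + 1 - d / 2) ^ (d - 1))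
  /\
  ((m < d)%nat ->
     forall mu, upper_density m C mu ->
       mu < 2 ^ m * INR (fact m) ^ 3 / INR (fact (2 * m)) / INR (d - m) ^ m).
Proof.
  intros Hm Hc Hd. repeat split.
  - intros rp rn Hr mu. now apply (upper_density_le_inv_S_card m C d).
  - intros Hdm mu. now apply upper_density_lt_balanced.
  - intros Hmd mu. now apply upper_density_lt_spread.
Qed.
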